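(* Let $\mathbf{F}_q$ have characteristic $p$, and let $D\subseteq\mathbf{F}_q$ with $|D|=q-1>4$. If $p$ is odd, then for every integer $k$ with $1<k<q-2$ and every $b\in\mathbf{F}_q$ there exist pairwise distinct $x_1,\dots,x_k\in D$ with $x_1+\dots+x_k=b$. If $p=2$, the same holds for every integer $k$ with $2<k<q-3$. *)

From HB Require Import structures.
From mathcomp Require Import all_boot all_order all_algebra all_field.
Set Implicit Arguments. Unset Strict Implicit. Unset Printing Implicit Defensive.

From HB Require Import structures.
From mathcomp Require Import all_boot all_order all_algebra all_field.
From mathcomp Require Import zify.
Import GRing.Theory.
Local Open Scope ring_scope.

(* - two distinct elements outside a forbidden set A sum to b as soon as     *)
(*   2|A| + 2 <= q, unless 2 = 0 and b = 0 (x + x = b would be forced);      *)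
(* - by induction, m >= 2 distinct elements outside A sum to b whenever      *)
(*   2(|A| + m) <= q + 2: choose x outside A and different from b, forbid x, *)
(*   and realize b - x, which is nonzero, with m - 1 elements;               *)
(* - for D = F_q minus a point this handles k <= q/2 directly; for larger k  *)
(*   realize (sum of D) - b with q - 1 - k elements of D and take the        *)
(*   complement in D.  In characteristic 2 the complementary size must stay  *)
(*   >= 3, which is why k = q - 3 is excluded there.                          *)

Lemma exists_notin {T : finType} {A : {set T}} :
  (#|A| < #|T|)%N -> exists x, x \notin A.
Proof.
move=> ltAT; have /set0Pn[x] : ~: A != set0.
  by rewrite -card_gt0; have := cardsC A; lia.
by rewrite inE; exists x.
Qed.

Section DistinctSums.
Variable F : finFieldType.

Definition distinct_sum (D : {set F}) (m : nat) (b : F) : Prop :=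
  exists S : {set F}, [/\ #|S| = m, S \subset D & \sum_(x in S) x = b].

(* Base case: a pair {x, b - x} outside A; x is chosen outside A, outside    *)
(* b - A and with x + x != b, which leaves room when 2|A| + 2 <= q.          *)
Lemma distinct_sum_pair (A : {set F}) (b : F) :
  (2 * #|A| + 2 <= #|F|)%N -> ((2%:R : F) != 0 \/ b != 0) ->
  distinct_sum (~: A) 2 b.
Proof.
move=> hcard h2b.
pose C := [set x : F | x + x == b].
have hC : (#|C| <= 1)%N.
  apply/card_le1_eqP => x y; rewrite !inE => /eqP hx /eqP hy.
  have h20 : (2%:R : F) != 0.
    apply/eqP => h20; case: h2b => [|/eqP]; first by rewrite h20 eqxx.
    by apply; rewrite -hx -mulr2n -mulr_natr h20 mulr0.
  by apply: (mulIf h20); rewrite !mulr_natr !mulr2n hx hy.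
pose B := A :|: [set b - y | y in A] :|: C.
have hB : (#|B| < #|F|)%N.
  (* |B| <= |A| + |b - A| + |C| <= 2|A| + 1 < q *)
  have hbA : (#|[set (b - y)%R | y in A]| <= #|A|)%N := leq_imset_card _ _.
  have hU := (leq_card_setU A [set b - y | y in A]).1.
  have hUC := (leq_card_setU (A :|: [set b - y | y in A]) C).1.
  apply: (leq_ltn_trans hUC).
  apply: (leq_ltn_trans (leq_add (leq_trans hU (leq_add (leqnn _) hbA)) hC)).
  lia.
have [x] := exists_notin hB.
rewrite !inE !negb_or => /andP[/andP[xA xbA] xC].
have bxA : b - x \notin A.
  apply: contra xbA => bxA; apply/imsetP; exists (b - x) => //.
  by rewrite opprB addrC subrK.
have xbx : x != b - x.
  by apply: contra xC => /eqP {2}->; rewrite addrC subrK.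
exists [set x; b - x]; split.
- by rewrite cards2 xbx.
- by apply/subsetP => y; rewrite !inE => /orP[] /eqP ->.
- by rewrite big_setU1 ?big_set1 ?inE //= addrC subrK.
Qed.

Lemma distinct_sum_avoiding (n : nat) (A : {set F}) (b : F) :
  (2 * (#|A| + n.+2) <= #|F| + 2)%N ->
  (n = 0%N -> (2%:R : F) != 0 \/ b != 0) ->
  distinct_sum (~: A) n.+2 b.
Proof.
elim: n A b => [|n IH] A b hcard h2b.
  by apply: distinct_sum_pair; [lia | exact: h2b].
have hbA : (#|b |: A| < #|F|)%N by have := cardsU1 b A; lia.
have [x] := exists_notin hbA; rewrite !inE negb_or => /andP[xb xA].
have hcard' : (2 * (#|x |: A| + n.+2) <= #|F| + 2)%N.
  by rewrite cardsU1 xA; lia.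
have bx0 : b - x != 0 by rewrite subr_eq0 eq_sym.
have [S [cardS sSxA sumS]] := IH (x |: A) (b - x) hcard' (fun=> or_intror bx0).
have xS : x \notin S.
  by apply/negP => /(subsetP sSxA); rewrite !inE eqxx.
exists (x |: S); split.
- by rewrite cardsU1 xS cardS.
- rewrite subUset sub1set inE xA /=; apply: subset_trans sSxA _.
  by rewrite setCS subsetUr.
- by rewrite big_setU1 //= sumS addrC subrK.
Qed.

Lemma distinct_sum_compl (D : {set F}) (m : nat) (b : F) :
  distinct_sum D m (\sum_(x in D) x - b) -> distinct_sum D (#|D| - m) b.
Proof.
case=> S [cardS sSD sumS]; exists (D :\: S); split.
- by rewrite cardsD (setIidPr sSD) cardS.
- exact: subsetDl.
- apply: (addrI (\sum_(x in D) x - b)); rewrite subrK -sumS.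
  by rewrite [RHS](big_setID S) /= (setIidPr sSD).
Qed.

Lemma two_neq0_pchar_odd {p : nat} : p \in [pchar F] -> odd p -> (2%:R : F) != 0.
Proof.
move=> pchar_p; apply: contraL => /eqP two0.
have : 2%N \in [pchar F] by rewrite inE two0 eqxx.
by rewrite (pcharf_eq pchar_p) inE => /eqP <-.
Qed.

Lemma distinct_sum_cofinite (D : {set F}) (k : nat) (b : F) :
  #|D| = (#|F| - 1)%N -> (1 < k)%N -> (k < #|F| - 2)%N ->
  ((2%:R : F) != 0 \/ (2 < k)%N /\ (k < #|F| - 3)%N) ->
  distinct_sum D k b.
Proof.
move=> hD hk1 hkq h2.
have hDc : #|~: D| = 1%N.
  by have : (#|D| + #|~: D| = #|F|)%N := cardsC D; lia.
(* Small k: apply the greedy lemma directly; large k: pass to complements. *)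
rewrite -[D]setCK; case: (leqP (2 * k) #|F|) => hk.
  have -> : k = (k - 2).+2 by lia.
  apply: distinct_sum_avoiding; first by rewrite hDc; lia.
  by case: h2 => [|[]]; [left | lia].
have -> : k = (#|~: ~: D| - (#|F| - 3 - k).+2)%N by rewrite setCK; lia.
apply: distinct_sum_compl; apply: distinct_sum_avoiding.
  by rewrite hDc; lia.
by case: h2 => [|[]]; [left | lia].
Qed.

Lemma distinct_sum_family (D : {set F}) (k : nat) (b : F) :
  distinct_sum D k b ->
  exists x : 'I_k -> F,
    [/\ injective x, (forall i, x i \in D) & \sum_(i < k) x i = b].
Proof.
case=> S [cardS sSD sumS].
have sizeS : size (enum S) = k by rewrite -cardE.
exists (fun i => nth 0 (enum S) i); split.
- move=> i j /eqP; rewrite nth_uniq ?sizeS ?enum_uniq // => /eqP; exact: val_inj.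
- by move=> i; apply: (subsetP sSD); rewrite -mem_enum mem_nth ?sizeS.
- by rewrite -sumS -[RHS]big_enum [RHS](big_nth 0) sizeS big_mkord.
Qed.

End DistinctSums.

(* characteristic 2 the stronger range of k replaces the invertibility of 2; *)
Theorem corollary2p8 (F : finFieldType) (p : nat) (pchar_p : p \in [pchar F])
  (D : {set F}) (hD : #|D| = (#|F| - 1)%N) (hD4 : (4 < #|D|)%N) :
  (odd p ->
     forall (k : nat) (b : F), (1 < k)%N -> (k < #|F| - 2)%N ->
       exists x : 'I_k -> F,
         [/\ injective x, (forall i, x i \in D) & \sum_(i < k) x i = b])
  /\
  (p = 2%N ->
     forall (k : nat) (b : F), (2 < k)%N -> (k < #|F| - 3)%N ->
       exists x : 'I_k -> F,
         [/\ injective x, (forall i, x i \in D) & \sum_(i < k) x i = b]).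
Proof.
split=> [p_odd | _] k b hk1 hk2; apply: distinct_sum_family.
- have two_neq0 := two_neq0_pchar_odd _ pchar_p p_odd.
  exact: distinct_sum_cofinite hD hk1 hk2 (or_introl two_neq0).
- apply: distinct_sum_cofinite hD (ltnW hk1) _ (or_intror (conj hk1 hk2)).
  exact: leq_trans hk2 (leq_sub2l _ (leqnSn 2)).
Qed.
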